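(* Let $A \subset \mathbb{R}$ be finite, let $K>0$, and suppose that $E^{\times}(A) \geq \frac{|A|^3}{K}$. Then there is a subset $A'\subseteq A$ and a number $\Delta \gg |A|/K$ such that $$|A'|\gtrsim\frac{|A|^2}{K\Delta}\qquad\text{and}\qquad d_*(A')\lesssim \frac{K|A'|^2}{|A|\Delta}.$$
   Context: $E^{\times}(A)$ is the number of solutions of $a_1/b_1=a_2/b_2$ with $a_i,b_i\in A$. For finite $A\subset\mathbb{R}$, define $$d_*(A)=\min_{t>0}\ \min_{Q,R} \frac{|Q|^2|R|^2}{|A|t^3},$$ where the inner minimum is over nonempty finite sets $Q,R\subset\mathbb{R}\setminus\{0\}$ with $\max\{|Q|,|R|\}\ge |A|$ such that $|Q\cap aR^{-1}|\ge t$ for every $a\in A$ (here $aR^{-1}=\{a/r: r\in R\}$). Notation: $X\ll Y$ / $Y\gg X$ means $X\le cY$ for an absolute constant $c>0$; $X\gtrsim Y$ (equivalently $Y\lesssim X$) means there is an absolute constant $c>0$ with $X\gg Y/(\log X)^c$, i.e. constant and logarithmic factors are suppressed. Logarithms are base 2. *)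

From HB Require Import structures.
From mathcomp Require Import all_boot all_order all_algebra.
From mathcomp Require Import finmap.
From mathcomp Require Import all_classical all_reals all_analysis.
Set Implicit Arguments. Unset Strict Implicit. Unset Printing Implicit Defensive.
Import Order.TTheory GRing.Theory Num.Theory.
Local Open Scope ring_scope.
Local Open Scope fset_scope.

Definition mult_energy (R : realType) (A : {fset R}) : nat :=
  (\sum_(a1 <- A) \sum_(b1 <- A) \sum_(a2 <- A) \sum_(b2 <- A)
     (a1 / b1 == a2 / b2 : nat))%N.

Definition dil_inv (R : realType) (a : R) (S : {fset R}) : {fset R} :=
  [fset a / r | r in S].

Definition dstar_admissible (R : realType) (A : {fset R}) (t : R)
  (Q S : {fset R}) : Prop :=
  [/\ 0 < t, Q != fset0 /\ S != fset0, (0 : R) \notin Q /\ (0 : R) \notin S,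
      (#|` A| <= maxn #|` Q| #|` S|)%N &
      forall a, a \in A -> t <= (#|` (Q `&` dil_inv a S)|)%:R].

Definition dstar_value (R : realType) (A : {fset R}) (t : R) (Q S : {fset R}) : R :=
  ((#|` Q|)%:R ^+ 2 * (#|` S|)%:R ^+ 2) / ((#|` A|)%:R * t ^+ 3).

(* d_*(A): the minimum (= infimum; it is attained whenever A is nonempty and
   0 \notin A) of the values over admissible data. *)
Definition dstar (R : realType) (A : {fset R}) : R :=
  inf [set v : R | exists t Q S, dstar_admissible A t Q S /\ v = dstar_value A t Q S].

Definition log2 (R : realType) (x : R) : R := ln x / ln 2.

(* Write E(A) = sum_{a,b in A} r(a/b), where r(x) counts the representations
   x = c/d with c, d in A.  Layering by popularity, E(A) = sum_{D >= 1} W(D),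
   where W(D) counts the pairs (a, b) with r(a/b) >= D, and a harmonic-sum
   pigeonhole yields D with E(A) <~ D W(D).  The set P of ratios x with
   r(x) >= D satisfies D |P| <= W(D).  Layering again, W(D) = sum_{d >= 1} |A_d|
   where A_d is the set of a in A having at least d elements b with a/b in P,
   and a second pigeonhole yields d with W(D) <~ d |A_d|.  Every a in A_d has
   |A /\ a P^-1| >= d, so (t, Q, R) = (d, A, P) witnesses
   d_*(A_d) <= |A|^2 |P|^2 / (|A_d| d^3); the two pigeonhole bounds turn this
   into the claim for A' = A_d and Delta = |A|^2 / (K |A_d|). *)

From HB Require Import structures.
From mathcomp Require Import all_boot all_order all_algebra.
From mathcomp Require Import finmap.
From mathcomp Require Import all_classical all_reals all_analysis.
From mathcomp Require Import zify ring lra.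
Import Order.TTheory GRing.Theory Num.Theory.
Local Open Scope ring_scope.

Lemma sum_nat_layers {n M : nat} : (n <= M)%N ->
  (\sum_(1 <= k < M.+1) (k <= n : nat))%N = n.
Proof.
move=> nM; suff -> : (\sum_(1 <= k < M.+1) (k <= n : nat))%N = minn n M.
  exact/minn_idPl.
elim: M {nM} => [|M IH]; first by rewrite big_geq // minn0.
rewrite big_nat_recr //= IH; case: (leqP M.+1 n) => /=; lia.
Qed.

Lemma sum_nat_eq_mem (T : eqType) (s : seq T) (y : T) : uniq s ->
  (\sum_(x <- s) (y == x : nat))%N = (y \in s).
Proof.
move=> s_uniq; rewrite -count_uniq_mem // -sum1_count [RHS]big_mkcond /=.
by apply: eq_bigr => x _; rewrite eq_sym; case: eqP.
Qed.

Definition harmonic (R : numFieldType) (n : nat) : R := \sum_(1 <= k < n.+1) k%:R^-1.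

Lemma harmonic_ge0 (R : numFieldType) (n : nat) : 0 <= harmonic R n.
Proof. by apply: sumr_ge0 => k _; rewrite invr_ge0. Qed.

Lemma harmonic_ge1 (R : numFieldType) (n : nat) : (0 < n)%N -> 1 <= harmonic R n.
Proof.
move=> n0; rewrite /harmonic big_ltn // invr1 lerDl.
by apply: sumr_ge0 => k _; rewrite invr_ge0.
Qed.

Lemma invn_le_ln_succ (R : realType) (n : nat) : (0 < n)%N ->
  n.+1%:R^-1 <= ln (n.+1%:R : R) - ln n%:R.
Proof.
move=> n0.
have n1 : 1 < n.+1%:R :> R by rewrite ltr1n ltnS.
have := @le_ln1Dx R (- n.+1%:R^-1); rewrite ltrN2 invf_lt1 ?(lt_trans ltr01 n1) //.
have -> : 1 - n.+1%:R^-1 = n%:R / n.+1%:R :> R.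
  by rewrite -natr1; field; rewrite -natr1 in n1; apply: lt0r_neq0; have := ler0n R n; lra.
by rewrite ln_div ?posrE ?ltr0n // lerNr opprB => /(_ n1).
Qed.

Lemma harmonic_le_ln (R : realType) (n : nat) : (0 < n)%N ->
  harmonic R n <= 1 + ln n%:R.
Proof.
elim: n => [//|[|n] IH] _; first by rewrite /harmonic big_nat1 invr1 ln1 addr0.
rewrite /harmonic big_nat_recr //= -/(harmonic R n.+1).
apply: le_trans (lerD (IH isT) (@invn_le_ln_succ R n.+1 isT)) _.
by rewrite addrACA subrr addr0.
Qed.

Lemma harmonic_pigeonhole {R : realFieldType} (h : nat -> R) (n : nat) : (0 < n)%N ->
  exists2 k, (1 <= k <= n)%N &
    \sum_(1 <= i < n.+1) h i <= harmonic R n * (k%:R * h k).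
Proof.
move=> n0; set S := \sum_(1 <= i < n.+1) h i.
have H_gt0 : 0 < harmonic R n := lt_le_trans ltr01 (@harmonic_ge1 R n n0).
apply: contrapT => no_k.
have lt_h i : (1 <= i < n.+1)%N -> h i < S / harmonic R n * i%:R^-1.
  move=> /andP[i1 iSn]; have i_gt0 : 0 < i%:R :> R by rewrite ltr0n.
  rewrite -(ltr_pM2r i_gt0) mulfVK ?gt_eqF // ltr_pdivlMr // mulrC (mulrC (h i)).
  rewrite ltNge; apply/negP => hS; apply: no_k; exists i => //.
  by rewrite i1 -ltnS.
have := ltr_sum_nat (n0 : (1 < n.+1)%N) lt_h.
by rewrite -mulr_sumr -/(harmonic R n) mulfVK ?gt_eqF // ltxx.
Qed.

Lemma ln2_le1 (R : realType) : ln (2 : R) <= 1.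
Proof. by have := @le_ln1Dx R 1 (lt_trans (ltrN10 R) ltr01); rewrite -[1 + 1]/2%:R. Qed.

Lemma ln_succ_le_log2_double (R : realType) (n : nat) : (0 < n)%N ->
  1 + ln (n%:R : R) <= log2 (2 * n%:R).
Proof.
move=> n0; have ln2_gt0 : 0 < ln (2 : R) by rewrite ln_gt0 // ltr1n.
have lnn_ge0 : 0 <= ln (n%:R : R) by rewrite ln_ge0 // ler1n.
rewrite /log2 lnM ?posrE ?ltr0n // mulrDl divff ?gt_eqF // lerD2l.
by rewrite ler_pdivlMr // ler_piMr // ln2_le1.
Qed.

Lemma harmonic_le_log2 (R : realType) (n : nat) : (0 < n)%N ->
  harmonic R n <= log2 (2 * n%:R).
Proof.
by move=> n0; apply: le_trans (harmonic_le_ln R n n0) (ln_succ_le_log2_double R n n0).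
Qed.

Lemma harmonic_sqr_le_log2 (R : realType) (n : nat) : (0 < n)%N ->
  harmonic R (n * n) <= 2 * log2 (2 * n%:R).
Proof.
move=> n0; have nn0 : (0 < n * n)%N by rewrite muln_gt0 n0.
apply: le_trans (harmonic_le_ln R _ nn0) _.
apply: le_trans _ (ler_wpM2l _ (ln_succ_le_log2_double R n n0)) => //.
have lnn_ge0 : 0 <= ln (n%:R : R) by rewrite ln_ge0 // ler1n.
rewrite natrM lnM ?posrE ?ltr0n //; lra.
Qed.

Lemma log2_double_ge1 (R : realType) (n : nat) : (0 < n)%N ->
  1 <= log2 (2 * (n%:R : R)).
Proof.
move=> n0; apply: le_trans (ln_succ_le_log2_double R n n0).
by rewrite lerDl ln_ge0 // ler1n.
Qed.

Lemma harmonic_weight_le_log2 (R : realType) (n : nat) : (0 < n)%N ->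
  harmonic R (n * n) * harmonic R n ^+ 2 <= 2 * log2 (2 * n%:R) ^+ 3.
Proof.
move=> n0; rewrite [log2 _ ^+ 3]exprS mulrA.
apply: ler_pM; rewrite ?exprn_ge0 ?harmonic_ge0 //.
  exact: harmonic_sqr_le_log2.
by rewrite !expr2; apply: ler_pM; rewrite ?harmonic_ge0 // harmonic_le_log2.
Qed.

Local Open Scope fset_scope.

Lemma dstar_le_value {R : realType} {A : {fset R}} {t : R} {Q S : {fset R}} :
  dstar_admissible A t Q S -> dstar A <= dstar_value A t Q S.
Proof.
move=> adm; apply: ge_inf; last by exists t, Q, S.
exists 0 => _ [t' [Q' [S' [[t'_gt0 _ _ _ _] ->]]]].
by rewrite /dstar_value divr_ge0 // mulr_ge0 // exprn_ge0 // ltW.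
Qed.

Lemma dstar_fset0_le0 (R : realType) : dstar (fset0 : {fset R}) <= 0.
Proof.
have adm : dstar_admissible fset0 1 [fset (1 : R)] [fset 1].
  split=> //; first by split; apply/fset0Pn; exists 1; rewrite inE.
  by split; rewrite inE eq_sym oner_eq0.
by apply: le_trans (dstar_le_value adm) _; rewrite /dstar_value cardfs0 mul0r invr0 mulr0.
Qed.

Lemma energy_two_layer_bound {R : realFieldType} {N K E W D g H1 H2 d f : R} :
  0 < K -> 0 <= g -> 0 <= H1 -> 0 <= W ->
  N ^+ 3 / K <= E -> E <= H1 * (D * W) -> D * g <= W -> W <= H2 * (d * f) ->
  g * N ^+ 3 <= K * (H1 * H2 ^+ 2) * (d * f) ^+ 2.
Proof.
move=> K_gt0 g_ge0 H1_ge0 W_ge0; rewrite ler_pdivrMr // => NE EW DgW W_le.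
apply: le_trans (ler_wpM2l g_ge0 (le_trans NE (ler_wpM2r (ltW K_gt0) EW))) _.
rewrite [_ * (_ * K)](_ : _ = K * H1 * W * (D * g)); last by ring.
apply: le_trans (ler_wpM2l _ DgW) _; first by rewrite !mulr_ge0 // ltW.
rewrite (_ : K * H1 * W * W = K * H1 * W ^+ 2); last by ring.
rewrite [X in _ <= X](_ : _ = K * H1 * (H2 * (d * f)) ^+ 2); last by ring.
apply: ler_wpM2l; first by rewrite mulr_ge0 // ltW.
by rewrite !expr2; apply: ler_pM.
Qed.

Definition energy_scale {R : fieldType} (N K f : R) : R := N ^+ 2 / (K * f).

Section EnergyScale.
Context {R : realFieldType} {N K f : R}.
Hypotheses (N_gt0 : 0 < N) (K_gt0 : 0 < K) (f_gt0 : 0 < f).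

Lemma energy_scale_ge : f <= N -> N / K <= energy_scale N K f.
Proof.
move=> f_le; rewrite (_ : energy_scale N K f = N / K * (N / f)); last first.
  by rewrite /energy_scale; field; rewrite !gt_eqF.
by rewrite ler_peMr ?divr_ge0 ?(ltW N_gt0) ?(ltW K_gt0) // ler_pdivlMr // mul1r.
Qed.

Lemma energy_scale_gt0 : 0 < energy_scale N K f.
Proof. by rewrite divr_gt0 ?exprn_gt0 ?mulr_gt0. Qed.

Lemma sqr_div_energy_scale : N ^+ 2 / (K * energy_scale N K f) = f.
Proof. by rewrite /energy_scale; field; rewrite !gt_eqF. Qed.

Lemma div_energy_scale : K * f ^+ 2 / (N * energy_scale N K f) = K ^+ 2 * f ^+ 3 / N ^+ 3.
Proof. by rewrite /energy_scale; field; rewrite !gt_eqF. Qed.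

End EnergyScale.

Lemma energy_dstar_value_bound {R : realFieldType} {N K f d g X L : R} :
  0 < N -> 0 < K -> 0 < f -> 0 < d -> d <= N -> 0 <= g -> 0 <= X ->
  X <= 2 * L ^+ 3 -> g * N ^+ 3 <= K * X * (d * f) ^+ 2 ->
  N ^+ 2 * g ^+ 2 / (f * d ^+ 3) <= 4 * (K ^+ 2 * f ^+ 3 / N ^+ 3) * L ^+ 6.
Proof.
move=> N_gt0 K_gt0 f_gt0 d_gt0 d_le g_ge0 X_ge0 X_le gN_le.
set Y := 4 * K ^+ 2 * L ^+ 6 * d ^+ 3 * f ^+ 4.
have gN_sqr : (g * N ^+ 3) ^+ 2 <= d * Y.
  rewrite (_ : d * Y = (K * (2 * L ^+ 3) * (d * f) ^+ 2) ^+ 2); last by rewrite /Y; ring.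
  have L_ge0 : 0 <= 2 * L ^+ 3 := le_trans X_ge0 X_le.
  have gN_ge0 : 0 <= g * N ^+ 3 := mulr_ge0 g_ge0 (exprn_ge0 _ (ltW N_gt0)).
  have gN_le' := le_trans gN_le (ler_wpM2r (sqr_ge0 _) (ler_wpM2l (ltW K_gt0) X_le)).
  by rewrite !expr2; apply: ler_pM.
have Y_ge0 : 0 <= Y by rewrite -(pmulr_rge0 _ d_gt0); apply: le_trans (sqr_ge0 _) gN_sqr.
rewrite (_ : N ^+ 2 * g ^+ 2 / (f * d ^+ 3) = (g * N ^+ 3) ^+ 2 / (N ^+ 4 * f * d ^+ 3));
  last by field; rewrite !gt_eqF.
rewrite (_ : _ * L ^+ 6 = N * Y / (N ^+ 4 * f * d ^+ 3));
  last by rewrite /Y; field; rewrite !gt_eqF.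
rewrite ler_pM2r ?invr_gt0 ?mulr_gt0 ?exprn_gt0 //.
exact: le_trans gN_sqr (ler_wpM2r Y_ge0 d_le).
Qed.

Section RichRatios.
Context {R : realType} (A : {fset R}).

Definition ratio_count (x : R) : nat :=
  (\sum_(c <- A) \sum_(d <- A) (c / d == x : nat))%N.

Lemma mult_energyE :
  mult_energy A = (\sum_(a <- A) \sum_(b <- A) ratio_count (a / b))%N.
Proof.
apply: eq_bigr => a _; apply: eq_bigr => b _.
by apply: eq_bigr => c _; apply: eq_bigr => d _; rewrite eq_sym.
Qed.

Lemma ratio_count_le x : (ratio_count x <= #|` A| * #|` A|)%N.
Proof.
rewrite card_fset_sum1 big_distrl /=; apply: leq_sum => c _.
rewrite mul1n; apply: leq_sum => d _; exact: leq_b1.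
Qed.

Definition rich_pairs (D : nat) : nat :=
  (\sum_(a <- A) \sum_(b <- A) (D <= ratio_count (a / b) : nat))%N.

Lemma mult_energy_layers :
  mult_energy A = (\sum_(1 <= D < (#|` A| * #|` A|).+1) rich_pairs D)%N.
Proof.
rewrite mult_energyE /rich_pairs.
under eq_bigr => a _ do under eq_bigr => b _ do
  rewrite -{1}(sum_nat_layers (ratio_count_le (a / b))).
by under eq_bigr => a _ do rewrite exchange_big /=; rewrite exchange_big.
Qed.

Definition rich_ratios (D : nat) : {fset R} :=
  [fset x in [seq a / b | a <- A, b <- A] | (D <= ratio_count x)%N].

Lemma mem_rich_ratios D a b : a \in A -> b \in A ->
  (a / b \in rich_ratios D) = (D <= ratio_count (a / b))%N.
Proof.
by move=> aA bA; rewrite !inE (allpairs_f (fun a b => a / b) aA bA).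
Qed.

Lemma rich_pairsE D : rich_pairs D = (\sum_(x <- rich_ratios D) ratio_count x)%N.
Proof.
rewrite /rich_pairs (eq_big_seq (fun a =>
  \sum_(b <- A) \sum_(x <- rich_ratios D) (a / b == x : nat))%N); last first.
  move=> a aA; apply: eq_big_seq => b bA.
  by rewrite sum_nat_eq_mem ?fset_uniq // mem_rich_ratios.
by under eq_bigr => a _ do rewrite exchange_big /=; rewrite exchange_big.
Qed.

Lemma rich_ratios_card_le D : (D * #|` rich_ratios D| <= rich_pairs D)%N.
Proof.
rewrite rich_pairsE card_fset_sum1 big_distrr /= !big_seq.
by apply: leq_sum => x; rewrite muln1 inE => /andP[_].
Qed.

Definition rich_degree (D : nat) (a : R) : nat :=
  (\sum_(b <- A) (D <= ratio_count (a / b) : nat))%N.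

Definition rich_points (D d : nat) : {fset R} :=
  [fset a in A | (d <= rich_degree D a)%N].

Lemma rich_points_sub D d : rich_points D d `<=` A.
Proof. exact: fset_sub. Qed.

Lemma rich_degree_le D a : (rich_degree D a <= #|` A|)%N.
Proof. by rewrite card_fset_sum1; apply: leq_sum => b _; apply: leq_b1. Qed.

Lemma rich_pairs_layers D :
  rich_pairs D = (\sum_(1 <= d < #|` A|.+1) #|` rich_points D d|)%N.
Proof.
have card_rich_points d :
    #|` rich_points D d| = (\sum_(a <- A) (d <= rich_degree D a : nat))%N.
  rewrite card_fset_sum1 -big_fset_condE big_mkcond /=.
  by apply: eq_bigr => a _; case: leqP.
under [RHS]eq_bigr => d _ do rewrite card_rich_points.
rewrite exchange_big /=; apply: eq_bigr => a _.
by rewrite (sum_nat_layers (rich_degree_le D a)).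
Qed.

Hypothesis A_nz : (0 : R) \notin A.

Lemma rich_ratios_nz D : (0 : R) \notin rich_ratios D.
Proof.
rewrite !inE negb_and; apply/orP; left.
apply/allpairsP => -[[a b] /= [aA bA /esym/eqP]].
rewrite mulf_eq0 invr_eq0 => /orP[]/eqP ab0; [move: aA | move: bA];
  by rewrite ab0 (negPf A_nz).
Qed.

Lemma rich_degree_le_cap D a : a \in A ->
  (rich_degree D a <= #|` A `&` dil_inv a (rich_ratios D)|)%N.
Proof.
move=> aA.
have a_nz : a != 0 by apply: contraNneq A_nz => <-.
apply: (@leq_trans #|` [fset b in A | a / b \in rich_ratios D]|).
  rewrite card_fset_sum1 -big_fset_condE big_mkcond /=.
  by apply/eq_leq/eq_big_seq => b bA; rewrite mem_rich_ratios //; case: leqP.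
apply: fsubset_leq_card; apply/fsubsetP => b; rewrite !inE => /andP[bA ab_rich].
have b_nz : b != 0 by apply: contraNneq A_nz => <-.
rewrite bA; apply/imfsetP; exists (a / b); first by move: ab_rich; rewrite inE.
by rewrite invf_div mulrCA mulfV // mulr1.
Qed.

Lemma rich_points_admissible D d : (0 < d)%N -> A != fset0 ->
  rich_ratios D != fset0 ->
  dstar_admissible (rich_points D d) d%:R A (rich_ratios D).
Proof.
move=> d_gt0 A_neq0 P_neq0; split=> //; first by rewrite ltr0n.
- by split=> //; apply: rich_ratios_nz.
- by rewrite (leq_trans _ (leq_maxl _ _)) // fsubset_leq_card // rich_points_sub.
move=> a; rewrite !inE => /andP[aA d_le]; rewrite ler_nat.
exact: leq_trans d_le (rich_degree_le_cap D a aA).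
Qed.

Lemma exists_rich_points {K : R} : 0 < K -> A != fset0 ->
  #|` A|%:R ^+ 3 / K <= (mult_energy A)%:R ->
  exists D d, [/\ (0 < d)%N, (d <= #|` A|)%N, (0 < #|` rich_points D d|)%N,
    rich_ratios D != fset0 &
    #|` rich_ratios D|%:R * #|` A|%:R ^+ 3 <=
      K * (harmonic R (#|` A| * #|` A|) * harmonic R #|` A| ^+ 2) *
      (d%:R * #|` rich_points D d|%:R) ^+ 2].
Proof.
move=> K_gt0 A_neq0 energy_ge; set N := #|` A|.
have N_gt0 : (0 < N)%N by rewrite cardfs_gt0.
have NN_gt0 : (0 < N * N)%N by rewrite muln_gt0 N_gt0.
have [D _ E_le] := harmonic_pigeonhole (fun D => (rich_pairs D)%:R : R) _ NN_gt0.
rewrite -natr_sum -mult_energy_layers in E_le.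
have [d /andP[d_ge1 d_le] W_le] :=
  harmonic_pigeonhole (fun d => #|` rich_points D d|%:R : R) _ N_gt0.
rewrite -natr_sum -rich_pairs_layers in W_le.
have E_gt0 : 0 < (mult_energy A)%:R :> R.
  by apply: lt_le_trans energy_ge; rewrite divr_gt0 ?exprn_gt0 ?ltr0n.
have W_gt0 : (0 < rich_pairs D)%N.
  by rewrite lt0n; apply: contraTneq E_le => ->; rewrite mulr0n !mulr0 -ltNge.
exists D, d; split=> //.
- rewrite lt0n; apply: contraTneq W_le => ->.
  by rewrite mulr0n !mulr0 -ltNge ltr0n.
- by apply: contraTneq W_gt0; rewrite rich_pairsE => ->; rewrite big_seq_fset0.
apply: (energy_two_layer_bound K_gt0 _ _ _ energy_ge E_le _ W_le) => //.
- exact: harmonic_ge0.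
- by rewrite -natrM ler_nat rich_ratios_card_le.
Qed.

End RichRatios.

Theorem lemma6p4 (R : realType) :
  exists (C : R) (c : nat), 0 < C /\ (0 < c)%N /\
  forall (A : {fset R}) (K : R),
    (0 : R) \notin A -> 0 < K ->
    (#|` A|)%:R ^+ 3 / K <= (mult_energy A)%:R ->
    let L := log2 (2 * (#|` A|)%:R) in
    exists (A' : {fset R}) (D : R),
      [/\ A' `<=` A,
          (#|` A|)%:R / K <= C * D,
          (#|` A|)%:R ^+ 2 / (K * D) <= C * (#|` A'|)%:R * L ^+ c &
          dstar A' <= C * ((K * (#|` A'|)%:R ^+ 2) / ((#|` A|)%:R * D)) * L ^+ c].
Proof.
exists 4, 6%N; split; first by rewrite ltr0n.
split=> // A K A_nz K_gt0 energy_ge L.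
have [-> | A_neq0] := eqVneq A fset0.
  exists fset0, 0; rewrite cardfs0 !(mul0r, mulr0, invr0); split=> //.
  exact: dstar_fset0_le0.
have [D [d [d_gt0 d_le A'_gt0 P_neq0 bound]]] :=
  exists_rich_points A K_gt0 A_neq0 energy_ge.
have A_gt0 : (0 < #|` A|)%N by rewrite cardfs_gt0.
set A' := rich_points A D d; set N : R := #|` A|%:R; set f : R := #|` A'|%:R.
have N_gt0 : 0 < N by rewrite ltr0n.
have f_gt0 : 0 < f by rewrite ltr0n.
have f_le : f <= N by rewrite ler_nat fsubset_leq_card // rich_points_sub.
have L_ge1 : 1 <= L by rewrite log2_double_ge1.
exists A', (energy_scale N K f); split.
- exact: rich_points_sub.
- apply: le_trans (energy_scale_ge N_gt0 K_gt0 f_gt0 f_le) _.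
  by rewrite ler_pMl ?ler1n ?energy_scale_gt0.
- rewrite -/f sqr_div_energy_scale //.
  have L6_ge1 : 1 <= L ^+ 6 := exprn_ege1 6 L_ge1.
  nra.
- apply: le_trans (dstar_le_value (rich_points_admissible A A_nz D d d_gt0 A_neq0 P_neq0)) _.
  rewrite /dstar_value -/A' -/f -/N div_energy_scale //.
  apply: energy_dstar_value_bound bound; rewrite ?ltr0n ?ler_nat ?mulr_ge0 ?harmonic_ge0 //.
  exact: harmonic_weight_le_log2.
Qed.
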